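(* Let $A$ be a finite set of lines in $\mathbb{R}^2$. For every open halfplane $S_1$ and every set $S_2\subseteq\mathbb{R}^2$, $$\mu_A(S_1\cup S_2)\le \mu_A(S_1)\,\mu_A(S_2).$$
   Context: For a finite set $A$ of lines in $\mathbb{R}^2$, $V(A)$ denotes the set of all intersection points of pairs of lines of $A$. For $S\subseteq\mathbb{R}^2$, $\mu_A(S)=\max\{|A'| : A'\subseteq A,\ V(A')\subseteq S\}$ (so $\mu_A(S)\ge 1$ whenever $A\neq\emptyset$). *)

(* The plane R^2 is modelled as R * R for an arbitrary
   real (ordered) field R; the statement is then stated for every
   R : realFieldType (in particular for the real numbers). *)
From HB Require Import structures.
From mathcomp Require Import all_boot all_order all_algebra.
Set Implicit Arguments. Unset Strict Implicit. Unset Printing Implicit Defensive.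
Import Order.TTheory GRing.Theory Num.Theory.
Local Open Scope ring_scope.

(* A line is given by coefficients (a, b, c) with (a, b) <> (0, 0);
   it is the point set { (x, y) | a x + b y = c }. *)
Definition line_nondeg (R : realFieldType) (l : R * R * R) : bool :=
  (l.1.1 != 0) || (l.1.2 != 0).

Definition on_line (R : realFieldType) (l : R * R * R) (p : R * R) : bool :=
  l.1.1 * p.1 + l.1.2 * p.2 == l.2.

(* A finite set of lines: a sequence A of nondegenerate coefficient
   triples whose point sets are pairwise distinct. *)
Definition line_family (R : realFieldType) (A : seq (R * R * R)) : Prop :=
  (forall i : 'I_(size A), line_nondeg (tnth (in_tuple A) i)) /\
  (forall i j : 'I_(size A), i != j ->
     exists p : R * R,
       on_line (tnth (in_tuple A) i) p != on_line (tnth (in_tuple A) j) p).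

(* V(A') subset S, where A' is the set of lines of A indexed by B:
   every intersection point of two distinct lines of A' lies in S. *)
Definition V_sub (R : realFieldType) (A : seq (R * R * R))
    (B : {set 'I_(size A)}) (S : R * R -> Prop) : Prop :=
  forall (i j : 'I_(size A)) (p : R * R), i \in B -> j \in B -> i != j ->
    on_line (tnth (in_tuple A) i) p -> on_line (tnth (in_tuple A) j) p -> S p.

(* is_mu A S m  <->  m = mu_A(S) = max { |A'| : A' subset A, V(A') subset S } *)
Definition is_mu (R : realFieldType) (A : seq (R * R * R))
    (S : R * R -> Prop) (m : nat) : Prop :=
  (exists B : {set 'I_(size A)}, V_sub B S /\ #|B| = m) /\
  (forall B : {set 'I_(size A)}, V_sub B S -> (#|B| <= m)%N).

Definition open_halfplane (R : realFieldType) (S : R * R -> Prop) : Prop :=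
  exists a b c : R, ((a != 0) || (b != 0)) /\
    forall p : R * R, S p <-> c < a * p.1 + b * p.2.

From HB Require Import structures.
From mathcomp Require Import all_boot all_order all_algebra ring lra.
Import Order.TTheory GRing.Theory Num.Theory.
Set Implicit Arguments. Unset Strict Implicit. Unset Printing Implicit Defensive.

(* Let A' be a subfamily of A with V(A') in S1 u S2.  Partially order A' so
   that two distinct lines are comparable exactly when they meet inside the
   open halfplane S1.  A chain then has all its intersection points in S1, so
   it has at most mu(S1) lines; an antichain has all of them outside S1, hence
   in S2, so it has at most mu(S2) lines.  The dual of Dilworth's theorem
   (Mirsky) bounds |A'| by the product.  The order comes from coordinates
   adapted to S1: a line not parallel to its boundary is the graph of an affine
   function of the height above the boundary, and two such graphs cross at
   positive height iff their values at height 0 and their slopes are in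
   opposite order. *)

Lemma card_le_mul_levels (T : finType) (f : T -> nat) (B : {set T}) (h w : nat) :
  {in B, forall x, 0 < f x <= h} ->
  (forall k, #|[set x in B | f x == k]| <= w) ->
  #|B| <= h * w.
Proof.
move=> f_range level_le.
suff card_low n : #|[set x in B | f x <= n]| <= n * w.
  suff -> : B = [set x in B | f x <= h] by [].
  by apply/setP => x; rewrite inE; case: (boolP (x \in B)) => // /f_range /andP[].
elim: n => [|n IHn].
  rewrite leqn0 cards_eq0; apply/eqP/setP => x; rewrite !inE leqn0.
  apply/negbTE/andP => -[/f_range /andP[fx_gt0 _] /eqP fx0].
  by rewrite fx0 in fx_gt0.
apply: (@leq_trans #|[set x in B | f x <= n] :|: [set x in B | f x == n.+1]|).
  apply: subset_leq_card; apply/subsetP => x; rewrite !inE.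
  by case/andP=> -> /=; rewrite leq_eqVlt ltnS orbC.
apply: leq_trans (leq_card_setU _ _).1 _.
by rewrite mulSn addnC leq_add.
Qed.

Section ChainAntichain.
Variables (T : finType) (r : rel T) (B : {set T}).
Hypotheses (r_irr : irreflexive r) (r_trans : transitive r).

Definition chain (C : {set T}) : bool :=
  [forall x in C, forall y in C, (x != y) ==> r x y || r y x].

Definition antichain (D : {set T}) : bool :=
  [forall x in D, forall y in D, ~~ r x y].

Definition chain_to (x : T) (C : {set T}) : bool :=
  [&& C \subset B, x \in C, chain C & [forall y in C, (y == x) || r y x]].

Definition height (x : T) : nat := \max_(C | chain_to x C) #|C|.

Lemma chain_to1 x : x \in B -> chain_to x [set x].
Proof.
move=> xB; rewrite /chain_to sub1set xB set11 /=.
apply/andP; split; apply/forall_inP => y /set1P ->; last by rewrite eqxx.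
by apply/forall_inP => z /set1P ->; rewrite eqxx.
Qed.

Lemma chain_toU1 x y C : y \in B -> r x y -> chain_to x C -> chain_to y (y |: C).
Proof.
move=> yB rxy /and4P[sCB xC /forall_inP C_chain /forall_inP C_to].
have C_lt u : u \in C -> r u y.
  by move=> uC; case/orP: (C_to u uC) => [/eqP -> //| rux]; apply: r_trans rux rxy.
rewrite /chain_to subUset sub1set yB sCB setU11 /=; apply/andP; split.
  apply/forall_inP => u /setU1P[-> | uC]; apply/forall_inP => v /setU1P[-> | vC];
    apply/implyP => uv.
  - by rewrite eqxx in uv.
  - by rewrite C_lt ?orbT.
  - by rewrite C_lt.
  - by move/forall_inP: (C_chain u uC) => /(_ v vC) /implyP; apply.
by apply/forall_inP => u /setU1P[-> | /C_lt ->]; rewrite ?eqxx ?orbT.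
Qed.

Lemma height_gt0 x : x \in B -> 0 < height x.
Proof.
move=> xB; have := @leq_bigmax_cond _ (chain_to x) (fun C => #|C|) _ (chain_to1 xB).
by rewrite cards1.
Qed.

Lemma height_le (h : nat) x :
  (forall C : {set T}, C \subset B -> chain C -> #|C| <= h) -> height x <= h.
Proof.
by move=> chain_le; apply/bigmax_leqP => C /and4P[sCB _ C_chain _]; apply: chain_le.
Qed.

Lemma height_lt x y : y \in B -> r x y -> height x < height y.
Proof.
move=> yB rxy; rewrite -(prednK (height_gt0 yB)) ltnS.
apply/bigmax_leqP => C C_to; rewrite -ltnS prednK ?height_gt0 //.
have y_notin_C : y \notin C.
  case/and4P: C_to => _ _ _ /forall_inP C_to.
  apply/negP => /C_to /orP[/eqP yx | ryx]; first by rewrite yx r_irr in rxy.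
  by have := r_irr y; rewrite (r_trans ryx rxy).
have := @leq_bigmax_cond _ (chain_to y) (fun C => #|C|) _ (chain_toU1 yB rxy C_to).
by rewrite cardsU1 y_notin_C.
Qed.

Lemma antichain_level k : antichain [set x in B | height x == k].
Proof.
apply/forall_inP => x; rewrite inE => /andP[_ /eqP hx].
apply/forall_inP => y; rewrite inE => /andP[yB /eqP hy].
by apply/negP => /(height_lt yB); rewrite hx hy ltnn.
Qed.

Lemma card_le_chain_mul_antichain (h w : nat) :
  (forall C : {set T}, C \subset B -> chain C -> #|C| <= h) ->
  (forall D : {set T}, D \subset B -> antichain D -> #|D| <= w) ->
  #|B| <= h * w.
Proof.
move=> chain_le antichain_le.
apply: (@card_le_mul_levels _ height) => [x xB | k].
  by rewrite height_gt0 ?height_le.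
by apply: antichain_le (antichain_level k); apply/subsetP => x; rewrite inE => /andP[].
Qed.

End ChainAntichain.

Local Open Scope ring_scope.

Section HalfplaneCoordinates.
Variables (R : realFieldType) (a b c : R).
Hypothesis ab_neq0 : (a != 0) || (b != 0).

(* Coordinates adapted to the halfplane c < a x + b y: its boundary is
   [altitude = 0] and [abscissa] runs along it. *)
Definition altitude (p : R * R) : R := a * p.1 + b * p.2 - c.
Definition abscissa (p : R * R) : R := a * p.2 - b * p.1.

(* [tilt l = 0] iff [l] is parallel to the boundary, in which case [l] is
   [altitude = level l]; otherwise [l] is
   [abscissa = intercept l + slope l * altitude]. *)
Definition tilt (l : R * R * R) : R := l.1.1 * b - l.1.2 * a.
Definition ldot (l : R * R * R) : R := a * l.1.1 + b * l.1.2.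
Definition loffset (l : R * R * R) : R := ldot l * c - (a ^+ 2 + b ^+ 2) * l.2.

Definition intercept l := loffset l / tilt l.
Definition slope l := ldot l / tilt l.
Definition level l := - loffset l / ldot l.

Lemma sqr_add_sqr_eq0 (x y : R) : (x ^+ 2 + y ^+ 2 == 0) = (x == 0) && (y == 0).
Proof. by rewrite paddr_eq0 ?sqr_ge0 // !sqrf_eq0. Qed.

Lemma norm2_neq0 : a ^+ 2 + b ^+ 2 != 0.
Proof. by rewrite sqr_add_sqr_eq0 negb_and. Qed.

Lemma on_line_coordE l p :
  on_line l p = (tilt l * abscissa p - ldot l * altitude p == loffset l).
Proof.
have -> : (tilt l * abscissa p - ldot l * altitude p == loffset l)
          = (- (a ^+ 2 + b ^+ 2) * (l.1.1 * p.1 + l.1.2 * p.2 - l.2) == 0).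
  rewrite -subr_eq0; congr (_ == 0).
  by rewrite /loffset /tilt /ldot /abscissa /altitude; ring.
by rewrite mulf_eq0 oppr_eq0 (negbTE norm2_neq0) subr_eq0.
Qed.

Lemma on_line_slopeE l p : tilt l != 0 ->
  on_line l p = (abscissa p == intercept l + slope l * altitude p).
Proof.
move=> tilt_neq0; rewrite on_line_coordE /intercept /slope.
apply/eqP/eqP => [<- | ->]; field; exact: tilt_neq0.
Qed.

Lemma ldot_neq0 l : line_nondeg l -> tilt l = 0 -> ldot l != 0.
Proof.
move=> l_nondeg tilt0; apply: contraTneq l_nondeg => ldot0.
have : tilt l ^+ 2 + ldot l ^+ 2 = (a ^+ 2 + b ^+ 2) * (l.1.1 ^+ 2 + l.1.2 ^+ 2).
  by rewrite /tilt /ldot; ring.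
rewrite tilt0 ldot0 !expr2 !mul0r addr0 => /esym/eqP.
by rewrite mulf_eq0 (negbTE norm2_neq0) -!expr2 sqr_add_sqr_eq0 /line_nondeg negb_or !negbK.
Qed.

Lemma on_line_levelE l p : line_nondeg l -> tilt l = 0 ->
  on_line l p = (altitude p == level l).
Proof.
move=> l_nondeg tilt0; have := ldot_neq0 l_nondeg tilt0.
rewrite on_line_coordE tilt0 /level mul0r sub0r => ldot_neq0.
apply/eqP/eqP => [<- | ->]; field; exact: ldot_neq0.
Qed.

(* Lines parallel to the boundary inside the halfplane lie below every line
   not parallel to it; lines parallel to it outside are below nothing. *)
Definition below (l1 l2 : R * R * R) : bool :=
  (tilt l2 != 0) &&
  (if tilt l1 != 0 then (intercept l1 < intercept l2) && (slope l2 < slope l1)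
   else 0 < level l1).

Lemma below_irr : irreflexive below.
Proof. by move=> l; rewrite /below; case: (tilt l != 0); rewrite ?ltxx. Qed.

Lemma below_trans : transitive below.
Proof.
move=> l2 l1 l3 /andP[tilt2 below12] /andP[tilt3].
rewrite tilt2 => /andP[lt_i23 lt_s32].
rewrite /below tilt3; case: (tilt l1 != 0) below12 => // /andP[lt_i12 lt_s21].
by rewrite (lt_trans lt_i12 lt_i23) (lt_trans lt_s32 lt_s21).
Qed.

Lemma meet_altitude_gt0 l1 l2 p :
  line_nondeg l1 -> line_nondeg l2 -> ~ on_line l1 =1 on_line l2 ->
  on_line l1 p -> on_line l2 p ->
  (0 < altitude p) = below l1 l2 || below l2 l1.
Proof.
move=> nd1 nd2 l12_neq; rewrite /below.
have [tilt1|tilt1] := eqVneq (tilt l1) 0; have [tilt2|tilt2] := eqVneq (tilt l2) 0.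
- rewrite !on_line_levelE // => /eqP e1 /eqP e2; case: l12_neq => q.
  by rewrite !on_line_levelE // -e1 -e2.
- by rewrite on_line_levelE // => /eqP <- _; rewrite orbF.
- by rewrite [on_line l2 p]on_line_levelE // => _ /eqP <-.
rewrite !on_line_slopeE // => /eqP e1 /eqP e2.
case: (ltgtP (slope l1) (slope l2)) => [lt_s | lt_s | eq_s]; rewrite ?andbF ?andbT /=.
- by apply/idP/idP => ?; nra.
- by apply/idP/idP => ?; nra.
case: l12_neq => q; rewrite !on_line_slopeE // eq_s.
suff -> : intercept l1 = intercept l2 by [].
by apply: (addIr (slope l1 * altitude p)); rewrite -e1 e2 eq_s.
Qed.

End HalfplaneCoordinates.

Theorem lemma1 (R : realFieldType) (A : seq (R * R * R))
    (S1 S2 : R * R -> Prop) (m1 m2 m : nat) :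
  line_family A -> open_halfplane S1 ->
  is_mu A S1 m1 -> is_mu A S2 m2 ->
  is_mu A (fun p => S1 p \/ S2 p) m ->
  (m <= m1 * m2)%N.
Proof.
move=> [nondegA distinctA] [a [b [c [ab_neq0 S1E]]]] [_ mu1_max] [_ mu2_max].
move=> [[B [VB <-]] _].
pose L i := tnth (in_tuple A) i.
have L_neq i j : i != j -> ~ on_line (L i) =1 on_line (L j).
  by move=> /(distinctA i j) [q] + Lij; rewrite Lij eqxx.
have meet_S1 i j p : i != j -> on_line (L i) p -> on_line (L j) p ->
    S1 p <-> below a b c (L i) (L j) || below a b c (L j) (L i).
  move=> ij pi pj.
  rewrite -(meet_altitude_gt0 c ab_neq0 (nondegA i) (nondegA j) (L_neq i j ij) pi pj).
  by rewrite S1E /altitude subr_gt0.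
apply: (@card_le_chain_mul_antichain _ (fun i j => below a b c (L i) (L j)))
  => [i | j i k | C _ C_chain | D D_sub D_anti].
- exact: below_irr.
- exact: below_trans.
- apply: mu1_max => i j p iC jC ij pi pj; apply/(meet_S1 i j) => //.
  by move/forall_inP: C_chain => /(_ i iC) /forall_inP /(_ j jC); rewrite ij.
- apply: mu2_max => i j p iD jD ij pi pj.
  have [|//] := VB i j p (subsetP D_sub _ iD) (subsetP D_sub _ jD) ij pi pj.
  move=> /(meet_S1 i j p ij pi pj); move/forall_inP: D_anti => D_anti.
  by rewrite (negbTE (forall_inP (D_anti i iD) j jD)) (negbTE (forall_inP (D_anti j jD) i iD)).
Qed.
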